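(* (Working in $\mathbf{ZF}$.) Let $X$ be a weakly normal generalized topological space such that $X_{top}$ is locally compact and not compact, let $K$ be a weakly Hausdorff topologically compact gts with $X\cap K=\emptyset$, and let $\psi:\mathrm{Cl}_K\to L(\mathrm{Cl}_X)$ be a lattice isomorphism. Then $\alpha^s_\psi X=(X\cup K,\mathrm{Op}^s,\mathrm{Cov}^s)$, together with the inclusion $X\hookrightarrow X\cup K$, is a weakly Hausdorff strict compactification of $X$ such that $K$ (with its own generalized topology) is a strict subspace of $\alpha^s_\psi X$, provided at least one of the following holds: (i) $\mathrm{Cov}_X$ and $\mathrm{Cov}_K$ are $\psi$-correlated, i.e. $\mathrm{Cov}_K=\{\{K\setminus\psi^{-1}([X\setminus U]^X):U\in\mathcal U\}:\mathcal U\in\mathrm{Cov}_X\}$; (ii) both $X$ and $K$ are small.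
   Context: A generalized topological space (gts) $(X,\mathrm{Op}_X,\mathrm{Cov}_X)$ is in the sense of Delfs–Knebusch ($\mathrm{Op}_X$ contains $\emptyset,X$, closed under finite unions and intersections; $\mathrm{Cov}_X$ a collection of families of open sets satisfying the Delfs–Knebusch axioms). $\mathrm{Cl}_X$ = complements of open sets; $X_{top}$ = $X$ with topology generated by $\mathrm{Op}_X$; topologically compact / weakly Hausdorff mean $X_{top}$ compact / Hausdorff. $X$ is weakly normal if disjoint sets, each a singleton or in $\mathrm{Cl}_X$, lie in disjoint open sets. Small: $\mathrm{Cov}_X$ = all essentially finite subfamilies of $\mathrm{Op}_X$ (a family is essentially finite if a finite subfamily has the same union). For $A,B\in\mathrm{Cl}_X$ put $A\sim B$ iff no $C\in\mathrm{Cl}_X$ with $C\subseteq A\triangle B$ is non-compact in $X_{top}$; $[A]^X$ is the class of $A$, and $L(\mathrm{Cl}_X)=\{[A]^X\}$ is the lattice with $[A]^X\wedge[B]^X=[A\cap B]^X$, $[A]^X\vee[B]^X=[A\cup B]^X$; $\mathrm{Cl}_K$ is a lattice under $\cap,\cup$. Let $\mathrm{Cl}^w=\{A\cup\psi^{-1}([A]^X):A\in\mathrm{Cl}_X\}$, $\mathrm{Op}^w$ the complements in $X\cup K$ of members of $\mathrm{Cl}^w$, $\tau$ the topology on $X\cup K$ generated by $\mathrm{Op}^w$, $\mathrm{Op}^s=\{U\in\tau:U\cap X\in\mathrm{Op}_X,\ U\cap K\in\mathrm{Op}_K\}$, $\mathrm{Cov}^s=\{\mathcal U\subseteq\mathrm{Op}^s:\{U\cap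 X:U\in\mathcal U\}\in\mathrm{Cov}_X,\ \{U\cap K:U\in\mathcal U\}\in\mathrm{Cov}_K\}$. For a gts $Z$ and $Y\subseteq Z$: $\mathrm{Cov}_Z\cap_2Y=\{\{Y\cap U:U\in\mathcal U\}:\mathcal U\in\mathrm{Cov}_Z\}$, $\langle\mathcal A\rangle_Y$ is the smallest generalized topology in $Y$ containing $\mathcal A$, the subspace $Y$ is $(Y,\langle\mathrm{Cov}_Z\cap_2Y\rangle_Y)$, and $Y$ is strict if $\langle\mathrm{Cov}_Z\cap_2Y\rangle_Y=\mathrm{Cov}_Z\cap_2Y$. A map $f$ is strictly continuous if preimages of admissible families are admissible; a strict embedding is a strictly continuous injection $f:X\to Z$ with $\{\{f(U):U\in\mathcal U\}:\mathcal U\in\mathrm{Cov}_X\}\subseteq\mathrm{Cov}_Z\cap_2f(X)$. A strict compactification of $X$ is a topologically compact gts $\alpha X$ with a strict embedding $\alpha:X\to\alpha X$ whose image is dense in $(\alpha X)_{top}$. *)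

From HB Require Import structures.
From mathcomp Require Import all_boot.
From mathcomp Require Import boolp classical_sets cardinality.
Set Implicit Arguments. Unset Strict Implicit. Unset Printing Implicit Defensive.
Local Open Scope classical_set_scope.

(* All spaces live inside an ambient type T; a "space" is a subset Y : set T,
   open sets are subsets of Y, families are sets of subsets. *)

Section Defs.
Variable T : Type.

Definition family := set (set T).

Definition funion (F : family) : set T := \bigcup_(U in F) U.

Definition is_gts (Y : set T) (Op : family) (Cov : set family) : Prop :=
  (forall U, Op U -> U `<=` Y) /\
      (forall F, Cov F -> F `<=` Op) /\
      Op set0 /\ Op Y /\
      (forall U V, Op U -> Op V -> Op (U `|` V) /\ Op (U `&` V)) /\
      (forall F, Cov F -> Op (funion F)) /\
      (forall F, F `<=` Op -> finite_set F -> Cov F) /\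
      (forall F V, Cov F -> Op V -> Cov ((fun U => U `&` V) @` F)) /\
      (forall F (W : set T -> family), Cov F ->
         (forall U, F U -> Cov (W U) /\ funion (W U) = U) ->
         Cov (\bigcup_(U in F) W U)) /\
      (forall F G, F `<=` Op -> Cov G -> funion G = funion F ->
         (forall V, G V -> Cov ((fun U => V `&` U) @` F)) -> Cov F) /\
      (forall F G, Cov F -> G `<=` Op -> funion G = funion F ->
         (forall U, F U -> exists2 V, G V & U `<=` V) -> Cov G).

Definition Cl (Y : set T) (Op : family) : family :=
  fun A => exists2 U, Op U & A = Y `\` U.

Definition is_topology (Y : set T) (tau : family) : Prop :=
  [/\ (forall U, tau U -> U `<=` Y), tau set0, tau Y,
      (forall F, F `<=` tau -> tau (funion F)) &
      (forall U V, tau U -> tau V -> tau (U `&` V))].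

Definition gen_top (Y : set T) (A : family) : family :=
  fun V => V `<=` Y /\
    forall tau, is_topology Y tau -> A `<=` tau -> tau V.

Definition compact_in (tau : family) (C : set T) : Prop :=
  forall F, F `<=` tau -> C `<=` funion F ->
    exists G, [/\ finite_set G, G `<=` F & C `<=` funion G].

Definition hausdorff_in (Y : set T) (tau : family) : Prop :=
  forall x y, Y x -> Y y -> x <> y ->
    exists U V, [/\ tau U, tau V, U x, V y & U `&` V = set0].

Definition locally_compact_in (Y : set T) (tau : family) : Prop :=
  forall x, Y x -> exists U C,
    [/\ tau U, U x, U `<=` C, C `<=` Y & compact_in tau C].

Definition top_compact (Y : set T) (Op : family) : Prop :=
  compact_in (gen_top Y Op) Y.
Definition weakly_hausdorff (Y : set T) (Op : family) : Prop :=
  hausdorff_in Y (gen_top Y Op).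
Definition weakly_normal (Y : set T) (Op : family) : Prop :=
  let ok := fun A => (exists2 x, Y x & A = [set x]) \/ Cl Y Op A in
  forall A B, ok A -> ok B -> A `&` B = set0 ->
    exists U V, [/\ Op U, Op V, A `<=` U, B `<=` V & U `&` V = set0].

Definition ess_finite (F : family) : Prop :=
  exists G, [/\ finite_set G, G `<=` F & funion G = funion F].
Definition small (Op : family) (Cov : set family) : Prop :=
  forall F, Cov F <-> (F `<=` Op /\ ess_finite F).

Definition cl_equiv (Y : set T) (Op : family) (A B : set T) : Prop :=
  ~ exists C, [/\ Cl Y Op C, C `<=` (A `\` B) `|` (B `\` A) &
                  ~ compact_in (gen_top Y Op) C].

(* the class [A]^X, as a set of closed sets *)
Definition cls (Y : set T) (Op : family) (A : set T) : family :=
  fun B => Cl Y Op B /\ cl_equiv Y Op A B.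

(* psi : Cl_K -> L(Cl_X) is a lattice isomorphism
   (lattice operations [A] /\ [B] = [A `&` B], [A] \/ [B] = [A `|` B]) *)
Definition lattice_iso (X : set T) (OpX : family) (K : set T) (OpK : family)
    (psi : set T -> family) : Prop :=
  [/\ (forall A, Cl K OpK A -> exists2 A', Cl X OpX A' & psi A = cls X OpX A'),
      (forall A', Cl X OpX A' -> exists2 A, Cl K OpK A & psi A = cls X OpX A'),
      (forall A B, Cl K OpK A -> Cl K OpK B -> psi A = psi B -> A = B),
      (forall A B A' B', Cl K OpK A -> Cl K OpK B -> Cl X OpX A' -> Cl X OpX B' ->
          psi A = cls X OpX A' -> psi B = cls X OpX B' ->
          psi (A `&` B) = cls X OpX (A' `&` B')) &
      (forall A B A' B', Cl K OpK A -> Cl K OpK B -> Cl X OpX A' -> Cl X OpX B' ->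
          psi A = cls X OpX A' -> psi B = cls X OpX B' ->
          psi (A `|` B) = cls X OpX (A' `|` B'))].

Definition psi_inv (K : set T) (OpK : family) (psi : set T -> family)
    (c : family) : set T :=
  fun x => exists B, [/\ Cl K OpK B, psi B = c & B x].

Section Construction.
Variables (X : set T) (OpX : family) (CovX : set family)
          (K : set T) (OpK : family) (CovK : set family)
          (psi : set T -> family).

Definition Z : set T := X `|` K.

Definition Clw : family :=
  fun C => exists2 A, Cl X OpX A & C = A `|` psi_inv K OpK psi (cls X OpX A).

Definition Opw : family := fun U => exists2 C, Clw C & U = Z `\` C.

Definition tau_w : family := gen_top Z Opw.

Definition Ops : family :=
  fun U => [/\ tau_w U, OpX (U `&` X) & OpK (U `&` K)].

Definition Covs : set family :=
  fun F => [/\ F `<=` Ops, CovX ((fun U => U `&` X) @` F)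
             & CovK ((fun U => U `&` K) @` F)].

Definition psi_correlated : Prop :=
  forall G, CovK G <-> exists2 F, CovX F &
    G = (fun U => K `\` psi_inv K OpK psi (cls X OpX (X `\` U))) @` F.
End Construction.

Definition trace2 (CovZ : set family) (S : set T) : set family :=
  fun G => exists2 F, CovZ F & G = (fun U => S `&` U) @` F.

Definition ops_of (Cov : set family) : family :=
  fun U => exists2 F, Cov F & U = funion F.

Definition gen_gtop (S : set T) (A : set family) : set family :=
  fun F => forall C : set family, is_gts S (ops_of C) C -> A `<=` C -> C F.

Definition strict_subspace (CovZ : set family)
    (S : set T) (OpS : family) (CovS : set family) : Prop :=
  [/\ CovS = gen_gtop S (trace2 CovZ S),
      OpS = ops_of (gen_gtop S (trace2 CovZ S)) &
      gen_gtop S (trace2 CovZ S) = trace2 CovZ S].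

Definition strictly_continuous (Y : set T) (CovY : set family)
    (Z : set T) (CovZ : set family) (f : T -> T) : Prop :=
  (forall x, Y x -> Z (f x)) /\
  forall G, CovZ G -> CovY ((fun V => Y `&` f @^-1` V) @` G).

Definition strict_embedding (Y : set T) (CovY : set family)
    (Z : set T) (CovZ : set family) (f : T -> T) : Prop :=
  [/\ strictly_continuous Y CovY Z CovZ f,
      (forall x y, Y x -> Y y -> f x = f y -> x = y) &
      (forall F, CovY F -> trace2 CovZ (f @` Y) ((fun U => f @` U) @` F))].

Definition strict_compactification (Y : set T) (OpY : family) (CovY : set family)
    (Z : set T) (OpZ : family) (CovZ : set family) (f : T -> T) : Prop :=
  [/\ is_gts Z OpZ CovZ,
      top_compact Z OpZ,
      strict_embedding Y CovY Z CovZ f &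
      (forall V, gen_top Z OpZ V -> (exists z, V z) -> exists2 x, Y x & V (f x))].

End Defs.

(* Basic open sets of Z = X ∪ K are the complements of A ∪ ψ⁻¹[A] with A closed
   in X, and ψ⁻¹[A] is empty exactly when A is compact, the compact closed sets
   forming the class [∅]^X.  Hence X is dense, and an open subset of X lying in a
   compact closed set is open in Z.  Compactness of Z: finitely many basic sets
   K ∖ ψ⁻¹[A_i] cover K, so A = ⋂ A_i has ψ⁻¹[A] = ∅, i.e. A is compact and needs
   only finitely many more members of the cover.  Hausdorffness: points of X are
   separated inside compact neighbourhoods by weak normality; points of K have
   disjoint closed neighbourhoods ψ⁻¹[C_1], ψ⁻¹[C_2], so C_1 ∩ C_2 is compact and,
   away from a compact neighbourhood of it, C_1 and C_2 are separated by weak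
   normality of X.  Covers transfer because Cov^s is defined through traces and
   U ↦ K ∖ ψ⁻¹[X ∖ U] maps Cov_X onto Cov_K under either hypothesis. *)

From mathcomp Require Import all_boot boolp classical_sets cardinality.
Set Implicit Arguments. Unset Strict Implicit. Unset Printing Implicit Defensive.
Local Open Scope classical_set_scope.

Ltac case_mem z := match goal with |- context [?S z] =>
  lazymatch goal with H : S z |- _ => fail | H : ~ S z |- _ => fail
  | _ => case: (pselect (S z)) => ? end end.

(* The rest of the context is cleared first, as [tauto] becomes
   very slow in the presence of large section hypotheses; memberships are
   decided classically only when [tauto] alone fails. *)
Ltac set_tauto :=
  let z := fresh "z" in first [apply/seteqP; split=> z | move=> z];
  repeat match goal with H : _ `<=` _ |- _ => move: (H z); clear H end;
  try unfold Z; rewrite /setD /setU /setI /setC /mkset /=;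
  repeat match goal with H : _ |- _ => clear H end;
  repeat (tauto || case_mem z).

Lemma finite_set_ind (S : Type) (P : set S -> Prop) :
  P set0 -> (forall A x, finite_set A -> P A -> P (A `|` [set x])) ->
  forall A, finite_set A -> P A.
Proof.
move=> P0 PU A /(@finite_seqP {classic S}) [s ->].
elim: s => [|x s IH]; first by rewrite set_nil.
have -> : [set` (x :: s)] = [set` s] `|` [set x].
  apply/seteqP; split=> y /=; rewrite inE.
    by case/orP=> [/eqP->|]; [right|left].
  by case=> [->|->]; rewrite ?eqxx ?orbT.
apply: PU => //; exact: (@finite_seq {classic S} s).
Qed.

Lemma finite_subset_image (A B : Type) (f : A -> B) (F : set A) (G : set B) :
  finite_set G -> G `<=` f @` F ->
  exists H, [/\ finite_set H, H `<=` F & G `<=` f @` H].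
Proof.
move: G; apply: finite_set_ind => [|G b fG IH] sG; first by exists set0; split.
case: (sG b (or_intror erefl)) => a Fa eb.
case: IH => [x Gx|H [fH sH GH]]; first by apply: sG; left.
exists (H `|` [set a]); split.
- by rewrite finite_setU.
- by move=> x [/sH|->].
- by move=> x [/GH [y Hy <-]|->]; [exists y => //; left|exists a => //; right].
Qed.

Section GeneratedTopology.
Variable T : Type.
Implicit Types (Y U V C D : set T) (A F G : set (set T)).

Lemma gen_top_sub Y A V : gen_top Y A V -> V `<=` Y.
Proof. by case. Qed.

Lemma gen_top_topology Y A : is_topology Y (gen_top Y A).
Proof.
split.
- by move=> U [].
- by split => // tau [].
- by split => // tau [].
- move=> F FG; split; first by move=> x [U /FG [sU _] /sU].
  move=> tau htau Atau; case: (htau) => _ _ _ hU _.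
  by apply: hU => U /FG [_]; apply.
- move=> U V [sU hU] [sV hV]; split; first by move=> x [/sU].
  move=> tau htau Atau; case: (htau) => _ _ _ _ hI.
  by apply: hI; [exact: hU|exact: hV].
Qed.

Lemma gen_top_gen Y A : (forall U, A U -> U `<=` Y) -> A `<=` gen_top Y A.
Proof. by move=> sA U AU; split; [exact: sA|move=> tau _; apply]. Qed.

Lemma gen_top_min Y A tau : is_topology Y tau -> A `<=` tau -> gen_top Y A `<=` tau.
Proof. by move=> ht At V [_]; apply. Qed.

Lemma topology_setU Y tau U V : is_topology Y tau -> tau U -> tau V -> tau (U `|` V).
Proof.
case=> _ _ _ hU _ tU tV.
have -> : U `|` V = funion [set U; V].
  apply/seteqP; split => x.
    by case=> h; [exists U => //; left|exists V => //; right].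
  by case=> W [->|->] ?; [left|right].
by apply: hU => W [->|->].
Qed.

Definition is_base Y A := [/\ (forall U, A U -> U `<=` Y), A Y &
   (forall U V, A U -> A V -> A (U `&` V))].

Lemma base_topology Y A : is_base Y A -> is_topology Y
  (fun V => V `<=` Y /\ forall x, V x -> exists2 U, A U & U x /\ U `<=` V).
Proof.
case=> sA AY AI; split.
- by move=> U [].
- by split => // x [].
- by split => // x Yx; exists Y => //; split.
- move=> F FG; split; first by move=> x [U /FG [sU _] /sU].
  move=> x [U FU Ux]; case: (FG U FU) => _ /(_ x Ux) [W AW [Wx WU]].
  by exists W => //; split => // y Wy; exists U => //; exact: WU.
- move=> U V [sU hU] [sV hV]; split; first by move=> x [/sU].
  move=> x [/hU [W1 A1 [W1x W1U]] /hV [W2 A2 [W2x W2V]]].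
  by exists (W1 `&` W2); [exact: AI|split => // y [/W1U ? /W2V ?]].
Qed.

Lemma gen_top_base_nbhd Y A V x : is_base Y A -> gen_top Y A V -> V x ->
  exists2 U, A U & U x /\ U `<=` V.
Proof.
move=> hb [sV h] Vx; have ht := h _ (base_topology hb); case: hb ht => sA _ _ ht.
case: ht => [U AU|_ /(_ x Vx)//].
by split; [exact: sA|move=> y Uy; exists U => //; split => // z].
Qed.

Lemma compact_setD tau C U : compact_in tau C -> tau U -> compact_in tau (C `\` U).
Proof.
move=> cC tU F Ftau sF.
case: (cC (F `|` [set U])).
- by move=> W [/Ftau|->].
- move=> x Cx; have [Ux|nUx] := pselect (U x); first by exists U => //; right.
  by case: (sF x (conj Cx nUx)) => W FW Wx; exists W => //; left.
move=> G [fG sG cG]; exists (G `\ U); split.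
- exact: finite_setD.
- by move=> W [/sG [//|WU] nWU]; case: nWU.
- move=> x [/cG [W GW Wx] nUx]; exists W => //; split => // WU.
  by apply: nUx; rewrite -WU.
Qed.

Lemma compact_setU tau C D : compact_in tau C -> compact_in tau D ->
  compact_in tau (C `|` D).
Proof.
move=> cC cD F Ft sF.
case: (cC F Ft) => [x Cx|G1 [f1 s1 c1]]; first by apply: sF; left.
case: (cD F Ft) => [x Dx|G2 [f2 s2 c2]]; first by apply: sF; right.
exists (G1 `|` G2); split.
- by rewrite finite_setU.
- by move=> W [/s1|/s2].
- by move=> x [/c1|/c2] [W GW Wx]; exists W => //; [left|right].
Qed.

Lemma compact_set0 (tau : set (set T)) : compact_in tau set0.
Proof. by move=> F _ _; exists set0; split. Qed.

End GeneratedTopology.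

Section Gts.
Variables (T : Type) (Y : set T) (Op : set (set T)) (Cov : set (set (set T))).
Hypothesis g : is_gts Y Op Cov.

Ltac gts_axioms := move: g => [h1 [h2 [h3 [h4 [h5 [h6 [h7 [h8 [h9 [h10 h11]]]]]]]]]].

Lemma gts_op_sub U : Op U -> U `<=` Y. Proof. by gts_axioms; apply: h1. Qed.
Lemma gts_cov_op F : Cov F -> F `<=` Op. Proof. by gts_axioms; apply: h2. Qed.
Lemma gts_op0 : Op set0. Proof. by gts_axioms. Qed.
Lemma gts_opT : Op Y. Proof. by gts_axioms. Qed.
Lemma gts_opU U V : Op U -> Op V -> Op (U `|` V).
Proof. by gts_axioms => oU oV; case: (h5 U V oU oV). Qed.
Lemma gts_opI U V : Op U -> Op V -> Op (U `&` V).
Proof. by gts_axioms => oU oV; case: (h5 U V oU oV). Qed.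
Lemma gts_op_funion F : Cov F -> Op (funion F).
Proof. by gts_axioms; apply: h6. Qed.
Lemma gts_cov_finite F : F `<=` Op -> finite_set F -> Cov F.
Proof. by gts_axioms; apply: h7. Qed.
Lemma gts_op_finite_funion F : F `<=` Op -> finite_set F -> Op (funion F).
Proof. by move=> ? ?; apply/gts_op_funion/gts_cov_finite. Qed.
Lemma gts_cov_setI F V : Cov F -> Op V -> Cov ((fun U => U `&` V) @` F).
Proof. by gts_axioms; apply: h8. Qed.
Lemma gts_cov_bigcup F (W : set T -> set (set T)) : Cov F ->
  (forall U, F U -> Cov (W U) /\ funion (W U) = U) -> Cov (\bigcup_(U in F) W U).
Proof. by gts_axioms; apply: h9. Qed.
Lemma gts_cov_local F G : F `<=` Op -> Cov G -> funion G = funion F ->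
  (forall V, G V -> Cov ((fun U => V `&` U) @` F)) -> Cov F.
Proof. by gts_axioms; apply: h10. Qed.
Lemma gts_cov_coarsen F G : Cov F -> G `<=` Op -> funion G = funion F ->
  (forall U, F U -> exists2 V, G V & U `<=` V) -> Cov G.
Proof. by gts_axioms; apply: h11. Qed.

Lemma Cl_sub A : Cl Y Op A -> A `<=` Y.
Proof. by case=> U _ -> x []. Qed.
Lemma Cl0 : Cl Y Op set0.
Proof. by exists Y; [exact: gts_opT|rewrite setDv]. Qed.
Lemma ClT : Cl Y Op Y.
Proof. by exists set0; [exact: gts_op0|rewrite setD0]. Qed.
Lemma ClU A B : Cl Y Op A -> Cl Y Op B -> Cl Y Op (A `|` B).
Proof. by case=> U oU -> [V oV ->]; exists (U `&` V); [exact: gts_opI|rewrite setDIr]. Qed.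
Lemma ClI A B : Cl Y Op A -> Cl Y Op B -> Cl Y Op (A `&` B).
Proof. by case=> U oU -> [V oV ->]; exists (U `|` V); [exact: gts_opU|rewrite setDUr]. Qed.
Lemma Cl_compl U : Op U -> Cl Y Op (Y `\` U).
Proof. by exists U. Qed.
Lemma op_compl A : Cl Y Op A -> Op (Y `\` A).
Proof.
case=> U oU ->; have UY := gts_op_sub oU.
by suff -> : Y `\` (Y `\` U) = U by []; set_tauto.
Qed.

Lemma op_gen_top U : Op U -> gen_top Y Op U.
Proof. by apply: gen_top_gen => V; apply: gts_op_sub. Qed.

Lemma op_base : is_base Y Op.
Proof. by split; [exact: gts_op_sub|exact: gts_opT|exact: gts_opI]. Qed.

Lemma Cl_subset_compact C D : compact_in (gen_top Y Op) C -> C `<=` Y ->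
  Cl Y Op D -> D `<=` C -> compact_in (gen_top Y Op) D.
Proof.
move=> cC CY [U oU eD] DC.
have -> : D = C `\` U.
  by rewrite eD in DC *; apply/seteqP; split=> x [Yx nUx]; split=> //; [exact: DC|exact: CY].
by apply: compact_setD => //; exact: op_gen_top.
Qed.

Lemma strict_subspace_trace (CovZ : set (set (set T))) :
  trace2 CovZ Y = Cov -> strict_subspace CovZ Y Op Cov.
Proof.
move=> eTr; rewrite /strict_subspace eTr.
have eOp : ops_of Cov = Op.
  apply/seteqP; split=> [_ [F cF ->]|U oU]; first exact: gts_op_funion.
  exists [set U]; first by apply: gts_cov_finite => // V ->.
  by apply/seteqP; split=> [z Uz|z [V -> //]]; exists U.
have eCov : gen_gtop Y Cov = Cov.
  apply/seteqP; split=> [F hF|F cF C _]; last exact.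
  by apply: hF; rewrite ?eOp.
by rewrite eCov eOp.
Qed.

End Gts.

Section Trace.
Variables (T : Type) (Y : set T) (Op : set (set T)) (Cov : set (set (set T))).
Hypothesis g : is_gts Y Op Cov.
Local Notation tr F := ((fun U => U `&` Y) @` F).

Lemma funion_trace F : funion (tr F) = funion F `&` Y.
Proof.
apply/seteqP; split => z; first by case=> _ [U FU <-] [Uz Yz]; split => //; exists U.
by case=> -[U FU Uz] Yz; exists (U `&` Y) => //; exists U.
Qed.

Lemma cov_trace_finite F : (forall U, F U -> Op (U `&` Y)) -> finite_set F -> Cov (tr F).
Proof.
move=> h fF; apply: (gts_cov_finite g); last exact: finite_image.
by move=> _ [U FU <-]; exact: h.
Qed.

Lemma cov_trace_setI F V : Cov (tr F) -> Op (V `&` Y) ->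
  Cov (tr ((fun U => U `&` V) @` F)).
Proof.
move=> cF oV; have := gts_cov_setI g cF oV.
rewrite !image_comp; congr (Cov (_ @` _)); apply: funext => U /=; set_tauto.
Qed.

Lemma cov_trace_local F G : (forall U, F U -> Op (U `&` Y)) -> Cov (tr G) ->
  funion G = funion F -> (forall V, G V -> Cov (tr ((fun U => V `&` U) @` F))) ->
  Cov (tr F).
Proof.
move=> oF cG eGF h; apply: (gts_cov_local g _ cG).
- by move=> _ [U FU <-]; exact: oF.
- by rewrite !funion_trace eGF.
- move=> _ [V GV <-]; have := h V GV.
  rewrite !image_comp; congr (Cov (_ @` _)); apply: funext => U /=; set_tauto.
Qed.

Lemma cov_trace_coarsen F G : Cov (tr F) -> (forall V, G V -> Op (V `&` Y)) ->
  funion G = funion F -> (forall U, F U -> exists2 V, G V & U `<=` V) ->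
  Cov (tr G).
Proof.
move=> cF oG eGF h; apply: (gts_cov_coarsen g cF).
- by move=> _ [V GV <-]; exact: oG.
- by rewrite !funion_trace eGF.
- move=> _ [U FU <-]; case: (h U FU) => V GV UV.
  by exists (V `&` Y); [exists V|move=> z [/UV]].
Qed.

Lemma cov_trace_bigcup F (W : set T -> set (set T)) : Cov (tr F) ->
  (forall U, F U -> Cov (tr (W U)) /\ funion (W U) = U) ->
  (forall U V, F U -> W U V -> Op (V `&` Y)) ->
  Cov (tr (\bigcup_(U in F) W U)).
Proof.
move=> cF hW oW.
(* re-index the family [W] by the traces [U `&` Y] *)
pose W' := fun U' V' => exists2 U, F U /\ U `&` Y = U' &
  exists2 V, W U V & V' = V `&` Y.
have -> : tr (\bigcup_(U in F) W U) = \bigcup_(U' in tr F) W' U'.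
  apply/seteqP; split.
    move=> _ [V [U FU WUV] <-]; exists (U `&` Y); first by exists U.
    by exists U => //; exists V.
  by move=> _ [_ [U0 FU0 <-] [U [FU eU] [V WUV ->]]]; exists V => //; exists U.
apply: (gts_cov_bigcup g cF) => _ [U0 FU0 <-].
have [c0 e0] := hW U0 FU0.
have eW' : funion (W' (U0 `&` Y)) = U0 `&` Y.
  apply/seteqP; split.
    move=> z [_ [U [FU <-] [V WUV ->]] [Vz Yz]]; split => //.
    by have [_ <-] := hW U FU; exists V.
  move=> z [U0z Yz]; have : funion (W U0) z by rewrite e0.
  case=> V WV Vz.
  by exists (V `&` Y); [exists U0; [split|exists V]|split].
split => //; apply: (gts_cov_coarsen g c0).
- by move=> _ [U [FU _] [V WUV ->]]; exact: (oW U V).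
- by rewrite eW' funion_trace e0.
- by move=> _ [V WV <-]; exists (V `&` Y) => //; exists U0 => //; exists V.
Qed.

End Trace.

Section LocallyCompactWeaklyNormal.
Variables (T : Type) (X : set T) (OpX : set (set T)) (CovX : set (set (set T))).
Hypothesis gX : is_gts X OpX CovX.
Hypothesis wnX : weakly_normal X OpX.
Hypothesis lcX : locally_compact_in X (gen_top X OpX).

Local Notation tX := (gen_top X OpX).
Local Notation ClX := (Cl X OpX).

Lemma point_compact_nbhd x : X x -> exists W Q,
  [/\ OpX W, ClX Q, compact_in tX Q, W x & W `<=` Q].
Proof.
move=> Xx; case: (lcX Xx) => U [C [tU Ux UC CX cC]].
case: (gen_top_base_nbhd (op_base gX) tU Ux) => O oO [Ox OU].
case: (wnX (A := [set x]) (B := X `\` O)).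
- by left; exists x.
- by right; exists O.
- by apply/seteqP; split => y // [-> []].
move=> G [H [oG oH sG sH GH]].
exists G, (X `\` H); split.
- exact: oG.
- exact: Cl_compl.
- apply: (Cl_subset_compact gX cC CX); first exact: Cl_compl.
  move=> y [Xy nHy]; apply/UC/OU; apply: contrapT => nOy; exact/nHy/sH.
- exact: sG.
- move=> y Gy; split; first exact: (gts_op_sub gX oG).
  by move=> Hy; have : (G `&` H) y by []; rewrite GH.
Qed.

Lemma compact_compact_nbhd S : S `<=` X -> compact_in tX S -> exists W Q,
  [/\ OpX W, ClX Q, compact_in tX Q, S `<=` W & W `<=` Q].
Proof.
move=> SX cS.
pose Fam := fun W => OpX W /\ exists Q, [/\ ClX Q, compact_in tX Q & W `<=` Q].
case: (cS Fam).
- by move=> W [oW _]; exact: (op_gen_top gX).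
- move=> x Sx; case: (point_compact_nbhd (SX x Sx)) => W [Q [oW cQ kQ Wx WQ]].
  by exists W => //; split => //; exists Q.
move=> G [fG sG cG].
suff [W [Q [oW cQ kQ GW WQ]]] : exists W Q,
    [/\ OpX W, ClX Q, compact_in tX Q, funion G `<=` W & W `<=` Q].
  by exists W, Q; split => // x /cG /GW.
clear cG; move: G fG sG; apply: finite_set_ind => [|G U fG IH] sG.
  exists set0, set0; split.
  - exact: gts_op0 gX.
  - exact: Cl0 gX.
  - exact: compact_set0.
  - by move=> x [W []].
  - by [].
have [oU [QU [cQU kQU UQU]]] := sG U (or_intror erefl).
case: IH => [W GW|W [Q [oW cQ kQ GW WQ]]]; first by apply: sG; left.
exists (W `|` U), (Q `|` QU); split.
- exact: (gts_opU gX oW oU).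
- exact: (ClU gX cQ cQU).
- exact: compact_setU.
- by move=> x [V [GV|->] Vx]; [left; apply: GW; exists V|right].
- by move=> x [/WQ|/UQU]; [left|right].
Qed.

Lemma cl_equiv_compact A B : ClX A -> compact_in tX A -> ClX B ->
  cl_equiv X OpX A B -> compact_in tX B.
Proof.
move=> cA kA cB hAB.
case: (compact_compact_nbhd (Cl_sub cA) kA) => W [Q [oW cQ kQ AW WQ]].
have cC : ClX (B `\` W).
  have BX := Cl_sub cB.
  have -> : B `\` W = B `&` (X `\` W) by set_tauto.
  exact/(ClI gX cB)/Cl_compl.
have kC : compact_in tX (B `\` W).
  apply: contrapT => nk; apply: hAB; exists (B `\` W); split => //.
  by move=> x [Bx nWx]; right; split => // /AW.
apply: (Cl_subset_compact gX (C := (B `\` W) `|` Q)) => //.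
- exact: compact_setU.
- by move=> x [[/(Cl_sub cB)]|/(Cl_sub cQ)].
- by move=> x Bx; have [/WQ|] := pselect (W x); [right|left].
Qed.

Lemma cls_refl A : ClX A -> cls X OpX A A.
Proof.
move=> cA; split => //; case=> C [_ sC []].
suff -> : C = set0 by exact: compact_set0.
by apply/seteqP; split => x // /sC [[]|[]].
Qed.

Lemma cls_compact A : ClX A -> compact_in tX A -> cls X OpX A = cls X OpX set0.
Proof.
move=> cA kA; apply/seteqP; split => B [cB hB].
- have kB := cl_equiv_compact cA kA cB hB.
  split => //; case=> C [cC sC []].
  by apply: (Cl_subset_compact gX kB (Cl_sub cB) cC) => x /sC [[]|[]].
- have kB : compact_in tX B.
    apply: contrapT => nk; apply: hB; exists B; split => //.
    by move=> x Bx; right; split.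
  split => //; case=> C [cC sC []].
  apply: (Cl_subset_compact gX (compact_setU kA kB) _ cC).
    by move=> x [/(Cl_sub cA)|/(Cl_sub cB)].
  by move=> x /sC [[? _]|[? _]]; [left|right].
Qed.

Lemma cls0_compact A : ClX A -> cls X OpX A = cls X OpX set0 -> compact_in tX A.
Proof.
move=> cA e; have : cls X OpX set0 A by rewrite -e; exact: cls_refl.
case=> _ h; apply: contrapT => nk; apply: h; exists A; split => //.
by move=> x Ax; right; split.
Qed.

End LocallyCompactWeaklyNormal.

Section CompactHausdorff.
Variables (T : Type) (K : set T) (OpK : set (set T)) (CovK : set (set (set T))).
Hypothesis gK : is_gts K OpK CovK.
Hypothesis hK : weakly_hausdorff K OpK.
Hypothesis cK : top_compact K OpK.

Lemma hausdorff_op x y : K x -> K y -> x <> y ->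
  exists U V, [/\ OpK U, OpK V, U x, V y & U `&` V = set0].
Proof.
move=> Kx Ky nxy; case: (hK Kx Ky nxy) => U [V [tU tV Ux Vy UV]].
case: (gen_top_base_nbhd (op_base gK) tU Ux) => U' oU' [U'x sU].
case: (gen_top_base_nbhd (op_base gK) tV Vy) => V' oV' [V'y sV].
exists U', V'; split => //; apply/seteqP; split => z // [/sU ? /sV ?].
by have : (U `&` V) z by []; rewrite UV.
Qed.

Lemma closed_nbhd_in_op k O : OpK O -> O k ->
  exists2 N, Cl K OpK N & N k /\ N `<=` O.
Proof.
move=> oO Ok; have Kk := gts_op_sub gK oO Ok.
have kC : compact_in (gen_top K OpK) (K `\` O).
  by apply: (Cl_subset_compact gK cK) => //; exact: Cl_compl.
pose Fam := fun V => OpK V /\ exists P, [/\ OpK P, P k & P `&` V = set0].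
case: (kC Fam).
- by move=> V [oV _]; exact: (op_gen_top gK).
- move=> y [Ky nOy]; have nyk : k <> y by move=> e; apply: nOy; rewrite -e.
  case: (hausdorff_op Kk Ky nyk) => P [V [oP oV Pk Vy PV]].
  by exists V => //; split => //; exists P.
move=> G [fG sG cG].
suff [W [P [oW oP Pk PW GW]]] : exists W P,
    [/\ OpK W, OpK P, P k, P `&` W = set0 & funion G `<=` W].
  exists (K `\` W); first exact: Cl_compl.
  split; first by split => // Wk; have : (P `&` W) k by []; rewrite PW.
  by move=> z [Kz nWz]; apply: contrapT => nOz; exact/nWz/GW/cG.
clear cG; move: G fG sG; apply: finite_set_ind => [|G V fG IH] sG.
  exists set0, K; split.
  - exact: gts_op0 gK.
  - exact: gts_opT gK.
  - exact: Kk.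
  - exact: setI0.
  - by move=> x [W []].
have [oV [PV [oPV PVk PVV]]] := sG V (or_intror erefl).
case: IH => [W GW|W [P [oW oP Pk PW GW]]]; first by apply: sG; left.
exists (W `|` V), (P `&` PV); split.
- exact: (gts_opU gK oW oV).
- exact: (gts_opI gK oP oPV).
- by [].
- apply/seteqP; split => z // [[Pz PVz] [Wz|Vz]].
    by have : (P `&` W) z by []; rewrite PW.
  by have : (PV `&` V) z by []; rewrite PVV.
- by move=> x [U [GU|->] Ux]; [left; apply: GW; exists U|right].
Qed.

Lemma hausdorff_closed_nbhds k1 k2 : K k1 -> K k2 -> k1 <> k2 ->
  exists N1 N2, [/\ Cl K OpK N1, Cl K OpK N2, N1 k1, N2 k2 & N1 `&` N2 = set0].
Proof.
move=> K1 K2 n12; case: (hausdorff_op K1 K2 n12) => U [V [oU oV Uk Vk UV]].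
case: (closed_nbhd_in_op oU Uk) => N1 c1 [N1k s1].
case: (closed_nbhd_in_op oV Vk) => N2 c2 [N2k s2].
exists N1, N2; split => //; apply/seteqP; split => z // [/s1 ? /s2 ?].
by have : (U `&` V) z by []; rewrite UV.
Qed.

End CompactHausdorff.

Section Construction.
Variables (T : Type) (X : set T) (OpX : set (set T)) (CovX : set (set (set T))).
Variables (K : set T) (OpK : set (set T)) (CovK : set (set (set T))).
Variable psi : set T -> set (set T).
Hypothesis gX : is_gts X OpX CovX.
Hypothesis wnX : weakly_normal X OpX.
Hypothesis lcX : locally_compact_in X (gen_top X OpX).
Hypothesis gK : is_gts K OpK CovK.
Hypothesis hK : weakly_hausdorff K OpK.
Hypothesis cK : top_compact K OpK.
Hypothesis disjXK : X `&` K = set0.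
Hypothesis iso : lattice_iso X OpX K OpK psi.

Local Notation tX := (gen_top X OpX).
Local Notation ClX := (Cl X OpX).
Local Notation ClK := (Cl K OpK).
Local Notation ZZ := (Z X K).
Local Notation OPS := (Ops X OpX K OpK psi).
Local Notation COVS := (Covs X OpX CovX K OpK CovK psi).
Local Notation TW := (tau_w X OpX K OpK psi).
Local Notation OPW := (Opw X OpX K OpK psi).

Definition pinv A := psi_inv K OpK psi (cls X OpX A).

Lemma pinv_char B A : ClK B -> psi B = cls X OpX A -> pinv A = B.
Proof.
move=> cB e; apply/seteqP; split => [x [B' [cB' e' B'x]]|x Bx]; last by exists B.
by case: iso => _ _ inj _ _; rewrite -(inj _ _ cB' cB) // e e'.
Qed.

Lemma pinv_Cl A : ClX A -> ClK (pinv A) /\ psi (pinv A) = cls X OpX A.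
Proof.
by move=> cA; case: iso => _ sur _ _ _; case: (sur A cA) => B cB e; rewrite (pinv_char cB e).
Qed.

Lemma pinv_sub A : pinv A `<=` K.
Proof. by move=> x [B [cB _ /(Cl_sub cB)]]. Qed.

Lemma pinvU A A' : ClX A -> ClX A' -> pinv (A `|` A') = pinv A `|` pinv A'.
Proof.
move=> cA cA'; case: (pinv_Cl cA) => c1 e1; case: (pinv_Cl cA') => c2 e2.
by apply: pinv_char; [exact: (ClU gK c1 c2)|case: iso => _ _ _ _; apply].
Qed.

Lemma pinvI A A' : ClX A -> ClX A' -> pinv (A `&` A') = pinv A `&` pinv A'.
Proof.
move=> cA cA'; case: (pinv_Cl cA) => c1 e1; case: (pinv_Cl cA') => c2 e2.
by apply: pinv_char; [exact: (ClI gK c1 c2)|case: iso => _ _ _ + _; apply].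
Qed.

Lemma pinv0 : pinv set0 = set0.
Proof.
case: (pinv_Cl (Cl0 gX)) => c e; case: iso => h1 _ _ h4 _.
case: (h1 _ (Cl0 gK)) => A' cA' e1.
apply: pinv_char (Cl0 gK) _.
by have := h4 _ _ _ _ (Cl0 gK) c cA' (Cl0 gX) e1 e; rewrite set0I setI0.
Qed.

Lemma pinvX : pinv X = K.
Proof.
case: (pinv_Cl (ClT gX)) => c e; case: iso => h1 _ _ _ h5.
case: (h1 _ (ClT gK)) => A' cA' e1.
have eK : K `|` pinv X = K by apply/setUidPl; exact: pinv_sub.
have eX : A' `|` X = X by apply/setUidPr; exact: (Cl_sub cA').
apply: pinv_char (ClT gK) _.
by have := h5 _ _ _ _ (ClT gK) c cA' (ClT gX) e1 e; rewrite eK eX.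
Qed.

Lemma pinv_eq0 A : ClX A -> pinv A = set0 <-> compact_in tX A.
Proof.
move=> cA; split=> [e|kA]; last first.
  by rewrite /pinv (cls_compact gX wnX lcX cA kA) -/(pinv set0) pinv0.
case: (pinv_Cl cA); rewrite e -pinv0 => _ e'.
by apply: (cls0_compact cA); rewrite -e'; case: (pinv_Cl (Cl0 gX)).
Qed.

Lemma XK_disj : X `<=` ~` K.
Proof. by move=> x Xx Kx; have : (X `&` K) x by []; rewrite disjXK. Qed.

Lemma OpwE U : OPW U <-> exists2 A, ClX A & U = ZZ `\` (A `|` pinv A).
Proof.
split; first by case=> C [A cA ->] ->; exists A.
by case=> A cA ->; exists (A `|` pinv A) => //; exists A.
Qed.

Lemma Opw_base : is_base ZZ OPW.
Proof.
split.
- by move=> U [C _ ->] x [].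
- by apply/OpwE; exists set0; [exact: Cl0 gX|rewrite pinv0 !set0U setD0].
- move=> U V /OpwE [A cA ->] /OpwE [B cB ->]; apply/OpwE.
  exists (A `|` B); first exact: (ClU gX cA cB).
  by rewrite (pinvU cA cB) -setDUr setUACA.
Qed.

Lemma tau_w_nbhd V z : TW V -> V z ->
  exists2 A, ClX A & [/\ ~ A z, ~ pinv A z & ZZ `\` (A `|` pinv A) `<=` V].
Proof.
move=> tV Vz; case: (gen_top_base_nbhd Opw_base tV Vz) => U /OpwE [A cA ->] [[_ nz] sU].
by exists A => //; split => // h; apply: nz; [left|right].
Qed.

Lemma Ops_sub U : OPS U -> U `<=` ZZ.
Proof. by case=> [[sU _] _ _]. Qed.

Lemma Ops_gen_top U : OPS U -> gen_top ZZ OPS U.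
Proof. by apply: gen_top_gen => V; apply: Ops_sub. Qed.

Lemma gen_top_Ops_tau_w V : gen_top ZZ OPS V -> TW V.
Proof. by apply: gen_top_min; [exact: gen_top_topology|move=> U []]. Qed.

Lemma Ops_Clw_compl A : ClX A -> OPS (ZZ `\` (A `|` pinv A)) /\
  (ZZ `\` (A `|` pinv A)) `&` K = K `\` pinv A.
Proof.
move=> cA; have [cp _] := pinv_Cl cA; have AX := Cl_sub cA.
have pK := @pinv_sub A; have dj := XK_disj.
have eX : (ZZ `\` (A `|` pinv A)) `&` X = X `\` A by set_tauto.
have eK : (ZZ `\` (A `|` pinv A)) `&` K = K `\` pinv A by set_tauto.
split=> //; split.
- by apply: gen_top_gen; [move=> U [C _ ->] x []|apply/OpwE; exists A].
- by rewrite eX; exact: (op_compl gX cA).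
- by rewrite eK; exact: (op_compl gK cp).
Qed.

Lemma Ops_compl_compact Q : ClX Q -> compact_in tX Q -> OPS (ZZ `\` Q).
Proof.
move=> cQ kQ; have [+ _] := Ops_Clw_compl cQ.
by rewrite (proj2 (pinv_eq0 cQ) kQ) setU0.
Qed.

Definition open_ext U := ZZ `\` ((X `\` U) `|` pinv (X `\` U)).
Definition open_trK U := K `\` pinv (X `\` U).

Lemma open_ext_Ops U : OpX U ->
  [/\ OPS (open_ext U), open_ext U `&` X = U & open_ext U `&` K = open_trK U].
Proof.
move=> oU; have [oE eK] := Ops_Clw_compl (Cl_compl X oU); split => //.
have UX := gts_op_sub gX oU; have dj := XK_disj; have pK := @pinv_sub (X `\` U).
rewrite /open_ext; set_tauto.
Qed.

Lemma open_ext_compact U Q : OpX U -> ClX Q -> compact_in tX Q -> U `<=` Q ->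
  open_ext U = U.
Proof.
move=> oU cQ kQ UQ; have UX := gts_op_sub gX oU; have QX := Cl_sub cQ.
have e1 : (X `\` U) `|` Q = X by set_tauto.
have epv : pinv (X `\` U) = K.
  have := pinvU (Cl_compl X oU) cQ.
  by rewrite e1 pinvX (proj2 (pinv_eq0 cQ) kQ) setU0.
rewrite /open_ext epv; have dj := XK_disj; set_tauto.
Qed.

Lemma Ops_compact_nbhd U Q : OpX U -> ClX Q -> compact_in tX Q -> U `<=` Q -> OPS U.
Proof.
move=> oU cQ kQ UQ; rewrite -(open_ext_compact oU cQ kQ UQ).
by case: (open_ext_Ops oU).
Qed.

Lemma X_dense V : gen_top ZZ OPS V -> (exists z, V z) -> exists2 x, X x & V (id x).
Proof.
move=> tV [z Vz]; have sV := gen_top_sub tV.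
case: (tau_w_nbhd (gen_top_Ops_tau_w tV) Vz) => A cA [nAz npz sA].
have [[x [Xx nAx]]|nex] := pselect (exists x, X x /\ ~ A x).
  exists x => //; apply: sA; split; first by left.
  by case => // /pinv_sub Kx; exact: (XK_disj Xx Kx).
have eA : A = X.
  apply/seteqP; split=> [|y Xy]; first exact: (Cl_sub cA).
  by apply: contrapT => nAy; apply: nex; exists y.
case: (sV z Vz) => [Xz|Kz]; first by exists z.
by case: npz; rewrite eA pinvX.
Qed.

Lemma open_ext_disjoint G1 G2 : OpX G1 -> OpX G2 -> G1 `&` G2 = set0 ->
  open_ext G1 `&` open_ext G2 = set0.
Proof.
move=> oG1 oG2 G12.
have dG : G1 `<=` ~` G2 by move=> z G1z G2z; have : (G1 `&` G2) z by []; rewrite G12.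
have eX : (X `\` G1) `|` (X `\` G2) = X by set_tauto.
have cK12 : K `<=` pinv (X `\` G1) `|` pinv (X `\` G2).
  by rewrite -pinvU ?eX ?pinvX //; exact: Cl_compl.
rewrite /open_ext; set_tauto.
Qed.

Lemma sep_XK x y : X x -> K y ->
  exists U V, [/\ OPS U, OPS V, U x, V y & U `&` V = set0].
Proof.
move=> Xx Ky; case: (point_compact_nbhd gX wnX lcX Xx) => W [Q [oW cQ kQ Wx WQ]].
exists W, (ZZ `\` Q); split.
- exact: (Ops_compact_nbhd oW cQ kQ WQ).
- exact: Ops_compl_compact.
- by [].
- by split; [right|move=> /(Cl_sub cQ) /XK_disj].
- by apply/seteqP; split => z // [/WQ ? []].
Qed.

Lemma sep_XX x y : X x -> X y -> x <> y ->
  exists U V, [/\ OPS U, OPS V, U x, V y & U `&` V = set0].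
Proof.
move=> Xx Xy nxy.
case: (wnX (A := [set x]) (B := [set y])).
- by left; exists x.
- by left; exists y.
- by apply/seteqP; split => z // [-> e]; apply: nxy.
move=> G [H [oG oH sG sH GH]].
case: (point_compact_nbhd gX wnX lcX Xx) => W1 [Q1 [oW1 cQ1 kQ1 W1x WQ1]].
case: (point_compact_nbhd gX wnX lcX Xy) => W2 [Q2 [oW2 cQ2 kQ2 W2y WQ2]].
exists (G `&` W1), (H `&` W2); split.
- by apply: (Ops_compact_nbhd _ cQ1 kQ1); [exact: (gts_opI gX)|move=> z [_ /WQ1]].
- by apply: (Ops_compact_nbhd _ cQ2 kQ2); [exact: (gts_opI gX)|move=> z [_ /WQ2]].
- by split => //; apply: sG.
- by split => //; apply: sH.
- apply/seteqP; split => z // [[Gz _] [Hz _]].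
  by have : (G `&` H) z by []; rewrite GH.
Qed.

(* [C1 `&` C2] is compact as psi^{-1} kills it; outside its compact
   neighbourhood [W] weak normality separates [C1] and [C2], and the extensions
   of the separating open sets avoid [pinv] exactly near [N1] and [N2]. *)
Lemma sep_KK k1 k2 : K k1 -> K k2 -> k1 <> k2 ->
  exists U V, [/\ OPS U, OPS V, U k1, V k2 & U `&` V = set0].
Proof.
move=> K1 K2 n12.
case: (hausdorff_closed_nbhds gK hK cK K1 K2 n12) => N1 [N2 [c1 c2 N1k N2k N12]].
case: iso => h1 _ _ _ _.
case: (h1 _ c1) => C1 cC1 /(pinv_char c1) p1; case: (h1 _ c2) => C2 cC2 /(pinv_char c2) p2.
have cC12 := ClI gX cC1 cC2.
have kC12 : compact_in tX (C1 `&` C2) by apply/(pinv_eq0 cC12); rewrite pinvI // p1 p2.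
case: (compact_compact_nbhd gX wnX lcX (Cl_sub cC12) kC12) => W [Q [oW cQ kQ CW WQ]].
have cW := Cl_compl X oW.
case: (wnX (A := C1 `&` (X `\` W)) (B := C2 `&` (X `\` W))).
- by right; exact: (ClI gX).
- by right; exact: (ClI gX).
- by apply/seteqP; split => z // [[C1z [_ nWz]] [C2z _]]; apply/nWz/CW.
move=> G1 [G2 [oG1 oG2 sG1 sG2 G12]].
have away C G N k : ClX C -> OpX G -> pinv C = N ->
    C `&` (X `\` W) `<=` G -> N k -> open_ext G k.
  move=> cC oG pC sG Nk; have Kk : K k by apply: (@pinv_sub C); rewrite pC.
  have cGC : ClX ((X `\` G) `&` C) by apply: (ClI gX) => //; exact: Cl_compl.
  have kGC : compact_in tX ((X `\` G) `&` C).
    apply: (Cl_subset_compact gX kQ (Cl_sub cQ) cGC) => z [[Xz nGz] Cz]; apply: WQ.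
    by apply: contrapT => nWz; apply/nGz/sG.
  have := proj2 (pinv_eq0 cGC) kGC; rewrite pinvI ?pC //; last exact: Cl_compl.
  move=> e; split; first by right.
  case=> [[/XK_disj /(_ Kk)]//|pGk].
  by have : (pinv (X `\` G) `&` N) k by []; rewrite e.
exists (open_ext G1), (open_ext G2); split.
- by case: (open_ext_Ops oG1).
- by case: (open_ext_Ops oG2).
- exact: (away C1 G1 N1).
- exact: (away C2 G2 N2).
- exact: open_ext_disjoint.
Qed.

Lemma weakly_hausdorff_Z : weakly_hausdorff ZZ OPS.
Proof.
move=> x y Zx Zy nxy.
suff [U [V [oU oV Ux Vy UV]]] : exists U V, [/\ OPS U, OPS V, U x, V y & U `&` V = set0].
  by exists U, V; split => //; exact: Ops_gen_top.
case: Zx => Xx; case: Zy => Yy.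
- exact: sep_XX.
- exact: sep_XK.
- case: (sep_XK Yy Xx) => U [V [oU oV Uy Vx UV]].
  by exists V, U; split => //; rewrite setIC.
- exact: sep_KK.
Qed.

Lemma gen_top_trace_X V : gen_top ZZ OPS V -> tX (V `&` X).
Proof.
suff : gen_top ZZ OPS `<=` (fun V => V `<=` ZZ /\ tX (V `&` X)) by move=> h /h [].
case: (gen_top_topology X OpX) => _ t0 tT tU tI.
apply: gen_top_min; last first.
  by move=> U oU; split; [exact: Ops_sub|case: oU => _ /(op_gen_top gX)].
split.
- by move=> U [].
- by split => //; rewrite set0I.
- by split => //; rewrite (_ : ZZ `&` X = X) //; apply/setIidr => z; left.
- move=> F FT; split; first by move=> z [U /FT [sU _] /sU].
  rewrite -funion_trace; apply: tU => _ [U /FT [_ h] <-]; exact: h.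
- move=> U W [sU hU] [sW hW]; split; first by move=> z [/sU].
  rewrite (_ : U `&` W `&` X = (U `&` X) `&` (W `&` X)); first exact: tI.
  by rewrite setIACA setIid.
Qed.

Definition Kcover F S := exists2 A, ClX A &
  S = K `\` pinv A /\ exists2 V, F V & ZZ `\` (A `|` pinv A) `<=` V.

Lemma Kcover_refine F G : finite_set G -> G `<=` Kcover F ->
  exists A H, [/\ ClX A, finite_set H, H `<=` F,
    ZZ `\` (A `|` pinv A) `<=` funion H & pinv A `<=` ~` funion G].
Proof.
move: G; apply: finite_set_ind => [|G S fG IH] sG.
  exists X, set0; split => //.
  - exact: (ClT gX).
  - by rewrite pinvX => z [[Xz|Kz] []]; [left|right].
  - by move=> z _ [U []].
case: (sG S (or_intror erefl)) => AS cAS [eS [VS FVS sVS]].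
case: IH => [U GU|A [H [cA fH sH sAH GA]]]; first by apply: sG; left.
exists (A `&` AS), (H `|` [set VS]); split.
- exact: (ClI gX cA cAS).
- by rewrite finite_setU; split.
- by move=> V [/sH|->].
- have AX := Cl_sub cA; have ASX := Cl_sub cAS; have dj := XK_disj.
  have pK := @pinv_sub A; have pSK := @pinv_sub AS.
  have split_cover : ZZ `\` ((A `&` AS) `|` (pinv A `&` pinv AS)) `<=`
      (ZZ `\` (A `|` pinv A)) `|` (ZZ `\` (AS `|` pinv AS)) by set_tauto.
  rewrite pinvI // => z /split_cover [/sAH [V HV Vz]|/sVS VSz].
    by exists V => //; left.
  by exists VS => //; right.
- rewrite pinvI // => z [pAz pSz] [U [GU|->] Uz]; first by apply: (GA z pAz); exists U.
  by move: Uz; rewrite eS => -[].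
Qed.

Lemma compact_Z : top_compact ZZ OPS.
Proof.
move=> F Ft sF.
case: (cK (F := Kcover F)).
- move=> S [A cA [-> _]]; apply: (op_gen_top gK); apply: (op_compl gK).
  exact: (proj1 (pinv_Cl cA)).
- move=> k Kk; case: (sF k (or_intror Kk)) => V FV Vk.
  case: (tau_w_nbhd (gen_top_Ops_tau_w (Ft V FV)) Vk) => A cA [nAk npk sA].
  by exists (K `\` pinv A) => //; exists A => //; split => //; exists V.
move=> G [fG sG cG].
case: (Kcover_refine fG sG) => A [H [cA fH sH sAH GA]].
have pA0 : pinv A = set0.
  apply/seteqP; split => z // pz; apply: (GA z pz); apply: cG; exact: (pinv_sub pz).
have kA := proj1 (pinv_eq0 cA) pA0.
case: (kA ((fun V => V `&` X) @` F)).
- by move=> _ [V FV <-]; apply/gen_top_trace_X/Ft.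
- move=> z Az; have Xz := Cl_sub cA Az.
  by case: (sF z (or_introl Xz)) => V FV Vz; exists (V `&` X) => //; exists V.
move=> G2 [fG2 sG2 cG2].
case: (finite_subset_image fG2 sG2) => H2 [fH2 sH2 GH2].
exists (H `|` H2); split.
- by rewrite finite_setU; split.
- by move=> V [/sH|/sH2].
- move=> z Zz; have [Az|nAz] := pselect (A z).
    case: (cG2 z Az) => W /GH2 [V H2V <-] [Vz _].
    by exists V; first right.
  case: (sAH z); first by split => //; rewrite pA0 => -[].
  by move=> V HV Vz; exists V => //; left.
Qed.

Lemma Ops0 : OPS set0.
Proof.
case: (gen_top_topology ZZ OPW) => _ t0 _ _ _.
by split; rewrite // set0I; [exact: (gts_op0 gX)|exact: (gts_op0 gK)].
Qed.

Lemma OpsZ : OPS ZZ.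
Proof.
case: (gen_top_topology ZZ OPW) => _ _ tZ _ _; split => //.
- by rewrite (_ : ZZ `&` X = X); [exact: (gts_opT gX)|apply/setIidr => z; left].
- by rewrite (_ : ZZ `&` K = K); [exact: (gts_opT gK)|apply/setIidr => z; right].
Qed.

Lemma OpsU U V : OPS U -> OPS V -> OPS (U `|` V).
Proof.
case=> tU xU kU [tV xV kV]; split.
- exact: (topology_setU (gen_top_topology ZZ OPW) tU tV).
- by rewrite setIUl; exact: (gts_opU gX).
- by rewrite setIUl; exact: (gts_opU gK).
Qed.

Lemma OpsI U V : OPS U -> OPS V -> OPS (U `&` V).
Proof.
case=> tU xU kU [tV xV kV]; split.
- by case: (gen_top_topology ZZ OPW) => _ _ _ _; apply.
- by rewrite setIIl; exact: (gts_opI gX).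
- by rewrite setIIl; exact: (gts_opI gK).
Qed.

Lemma Ops_funion F : F `<=` OPS -> CovX ((fun U => U `&` X) @` F) ->
  CovK ((fun U => U `&` K) @` F) -> OPS (funion F).
Proof.
move=> sF cX cK'; split.
- by case: (gen_top_topology ZZ OPW) => _ _ _ h _; apply: h => U /sF [].
- by rewrite -funion_trace; exact: (gts_op_funion gX).
- by rewrite -funion_trace; exact: (gts_op_funion gK).
Qed.

Lemma gts_Z : is_gts ZZ OPS COVS.
Proof.
split; first exact: Ops_sub.
split; first by move=> F [].
split; first exact: Ops0.
split; first exact: OpsZ.
split; first by move=> U V oU oV; split; [exact: OpsU|exact: OpsI].
split; first by move=> F [sF cX cK']; exact: Ops_funion.
split.
  move=> F sF fF; split => //.
  - by apply: (cov_trace_finite gX) => // U /sF [].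
  - by apply: (cov_trace_finite gK) => // U /sF [].
split.
  move=> F V [sF cX cK'] [tV oVX oVK]; split.
  - by move=> _ [U FU <-]; apply: OpsI => //; exact: sF.
  - exact: (cov_trace_setI gX).
  - exact: (cov_trace_setI gK).
split.
  move=> F W [sF cX cK'] hW; split.
  - by move=> V [U FU WUV]; case: (hW U FU) => -[sW _ _] _; exact: sW.
  - apply: (cov_trace_bigcup gX) => // [U FU|U V FU WUV].
      by case: (hW U FU) => -[_ ? _] ?.
    by case: (hW U FU) => -[sW _ _] _; case: (sW V WUV).
  - apply: (cov_trace_bigcup gK) => // [U FU|U V FU WUV].
      by case: (hW U FU) => -[_ _ ?] ?.
    by case: (hW U FU) => -[sW _ _] _; case: (sW V WUV).
split.
  move=> F G sF [sG cX cK'] eGF h; split => //.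
  - apply: (cov_trace_local gX _ cX eGF) => [U /sF []//|V GV].
    by case: (h V GV).
  - apply: (cov_trace_local gK _ cK' eGF) => [U /sF []//|V GV].
    by case: (h V GV).
move=> F G [sF cX cK'] sG eGF h; split => //.
- by apply: (cov_trace_coarsen gX cX) => // V /sG [].
- by apply: (cov_trace_coarsen gK cK') => // V /sG [].
Qed.

Lemma open_trK_op U : OpX U -> OpK (open_trK U).
Proof. by move=> oU; apply: (op_compl gK); case: (pinv_Cl (Cl_compl X oU)). Qed.

Lemma open_trKI U V : OpX U -> OpX V -> open_trK (U `&` V) = open_trK U `&` open_trK V.
Proof.
by move=> oU oV; rewrite /open_trK setDIr pinvU ?setDUr //; exact: Cl_compl.
Qed.

Lemma open_trKU U V : OpX U -> OpX V -> open_trK (U `|` V) = open_trK U `|` open_trK V.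
Proof.
by move=> oU oV; rewrite /open_trK setDUr pinvI ?setDIr //; exact: Cl_compl.
Qed.

Lemma open_trK_mono U V : OpX U -> OpX V -> U `<=` V -> open_trK U `<=` open_trK V.
Proof. by move=> oU oV /setUidPr eUV z Uz; rewrite -eUV open_trKU //; left. Qed.

Lemma open_trK_funion G : finite_set G -> G `<=` OpX ->
  open_trK (funion G) = funion (open_trK @` G).
Proof.
have funionU (f : set T -> set T) H U :
    funion (f @` (H `|` [set U])) = funion (f @` H) `|` f U.
  apply/seteqP; split => z.
    by case=> _ [V [HV|->] <-] Vz; [left; exists (f V) => //; exists V|right].
  case=> [[_ [V HV <-] Vz]|Uz]; first by exists (f V) => //; exists V => //; left.
  by exists (f U) => //; exists U => //; right.
move: G; apply: finite_set_ind => [|G U fG IH] sG.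
  rewrite image_set0 /open_trK (_ : funion set0 = set0).
    by rewrite setD0 pinvX setDv; apply/seteqP; split => z // [? []].
  by apply/seteqP; split => z // [? []].
have sG' : G `<=` OpX by move=> V GV; apply: sG; left.
have oU : OpX U by apply: sG; right.
have -> : funion (G `|` [set U]) = funion G `|` U by have := funionU id G U; rewrite !image_id.
by rewrite open_trKU ?IH ?funionU //; exact: (gts_op_finite_funion gX).
Qed.

Lemma open_trK_surj V : OpK V -> exists2 U, OpX U & open_trK U = V.
Proof.
move=> oV; have VK := gts_op_sub gK oV.
case: iso => h1 _ _ _ _; case: (h1 _ (Cl_compl K oV)) => A cA /(pinv_char (Cl_compl K oV)) pA.
case: (cA) => U oU eA; exists U => //.
by rewrite /open_trK -eA pA; set_tauto.
Qed.

Definition covers_compatible :=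
  psi_correlated X OpX CovX K OpK CovK psi \/ (small OpX CovX /\ small OpK CovK).

Lemma cov_open_trK F : covers_compatible -> CovX F -> CovK (open_trK @` F).
Proof.
move=> [corr|[smX smK]] cF; first by apply/corr; exists F.
have sF := gts_cov_op gX cF.
case: (proj1 (smX F) cF) => _ [G0 [fG0 sG0 eG0]].
have sG0' : G0 `<=` OpX by move=> V /sG0 /sF.
apply/smK; split; first by move=> _ [U FU <-]; apply/open_trK_op/sF.
exists (open_trK @` G0); split.
- exact: finite_image.
- by move=> _ [U GU <-]; exists U => //; exact: sG0.
- apply/seteqP; split.
    by move=> z [_ [U GU <-] Uz]; exists (open_trK U) => //; exists U => //; exact: sG0.
  move=> z [_ [U FU <-] Uz].
  rewrite -open_trK_funion //; apply: (open_trK_mono (sF U FU) (gts_op_finite_funion gX sG0' fG0)) Uz.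
  by rewrite eG0 => y Uy; exists U.
Qed.

Lemma open_ext_cov F : covers_compatible -> CovX F ->
  [/\ COVS (open_ext @` F), (fun U => U `&` X) @` (open_ext @` F) = F
    & (fun U => U `&` K) @` (open_ext @` F) = open_trK @` F].
Proof.
move=> hcov cF; have sF := gts_cov_op gX cF.
have eX : (fun U => U `&` X) @` (open_ext @` F) = F.
  rewrite image_comp -[RHS]image_id; apply: eq_imagel => U FU /=.
  by case: (open_ext_Ops (sF U FU)).
have eK : (fun U => U `&` K) @` (open_ext @` F) = open_trK @` F.
  rewrite image_comp; apply: eq_imagel => U FU /=.
  by case: (open_ext_Ops (sF U FU)).
split => //; split; rewrite ?eX ?eK //; last exact: cov_open_trK.
by move=> _ [U FU <-]; case: (open_ext_Ops (sF U FU)).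
Qed.

Lemma strict_embedding_Z : covers_compatible -> strict_embedding X CovX ZZ COVS id.
Proof.
move=> hcov; split => //.
- split; first by move=> x Xx; left.
  move=> G [_ cG _]; suff -> : (fun V => X `&` id @^-1` V) = (fun V => V `&` X) by [].
  by apply: funext => V; rewrite setIC.
- move=> F cF; rewrite image_id.
  have -> : (fun U : set T => id @` U) = id by apply: funext => U; rewrite image_id.
  case: (open_ext_cov hcov cF) => c eX _; exists (open_ext @` F) => //.
  rewrite image_id -[in LHS]eX; congr (_ @` _).
  by apply: funext => U; rewrite setIC.
Qed.

(* In the small case, lift each [V] in a finite subcover to a preimage [u V],
   and cut all preimages down to their finite union so that the family stays
   essentially finite. *)
Lemma small_covK_lift G : small OpX CovX -> small OpK CovK -> CovK G ->
  exists2 F, CovX F & G = open_trK @` F.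
Proof.
move=> smX smK cG; have sG := gts_cov_op gK cG.
case: (proj1 (smK G) cG) => _ [G0 [fG0 sG0 eG0]].
have [u hu] : {u : set T -> set T & forall V, OpK V -> OpX (u V) /\ open_trK (u V) = V}.
  apply: (choice (P := fun V U => OpK V -> OpX U /\ open_trK U = V)) => V.
  have [oV|noV] := pselect (OpK V); last by exists set0.
  by case: (open_trK_surj oV) => U oU e; exists U.
have sG0' : G0 `<=` OpK by move=> V /sG0 /sG.
have suG0 : u @` G0 `<=` OpX by move=> _ [V GV <-]; case: (hu V (sG0' V GV)).
pose W := funion (u @` G0).
have oW : OpX W by apply: (gts_op_finite_funion gX suG0); exact: finite_image.
have pW : open_trK W = funion G0.
  rewrite /W open_trK_funion //; last exact: finite_image.
  rewrite image_comp; congr funion; rewrite -[RHS]image_id; apply: eq_imagel => V GV /=.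
  by case: (hu V (sG0' V GV)).
pose f V := u V `&` W.
have ofV V : G V -> OpX (f V) by move=> GV; apply: (gts_opI gX) => //; case: (hu V (sG V GV)).
have fu V : G0 V -> f V = u V.
  by move=> GV; apply/setIidl => z uz; exists (u V) => //; exists V.
exists (f @` G).
  apply/smX; split; first by move=> _ [V GV <-]; exact: ofV.
  exists (f @` G0); split.
  - exact: finite_image.
  - by move=> _ [V GV <-]; exists V => //; exact: sG0.
  - apply/seteqP; split.
      by move=> z [_ [V GV <-] fz]; exists (f V) => //; exists V => //; exact: sG0.
    move=> z [_ [V GV <-] [_ [_ [V0 GV0 <-] uz]]].
    by exists (f V0); [exists V0|rewrite fu].
rewrite image_comp -[LHS]image_id; apply: eq_imagel => V GV /=.
have [oU pU] := hu V (sG V GV).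
rewrite /f open_trKI // pU pW eG0; apply/esym/setIidl => z Vz; exists V => //.
Qed.

Lemma trace_Z_K : covers_compatible -> trace2 COVS K = CovK.
Proof.
move=> hcov; apply/seteqP; split.
  move=> _ [F [_ _ cK'] ->].
  suff -> : (fun U : set T => K `&` U) = (fun U => U `&` K) by [].
  by apply: funext => U; rewrite setIC.
move=> G cG.
have [F cF ->] : exists2 F, CovX F & G = open_trK @` F.
  case: hcov => [corr|[smX smK]]; last exact: small_covK_lift.
  exact/corr.
case: (open_ext_cov hcov cF) => c _ eK; exists (open_ext @` F) => //.
rewrite -eK; congr (_ @` _); apply: funext => U; exact: setIC.
Qed.

End Construction.

Unset Implicit Arguments.

Theorem theorem6p3 (T : Type)
    (X : set T) (OpX : set (set T)) (CovX : set (set (set T)))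
    (K : set T) (OpK : set (set T)) (CovK : set (set (set T)))
    (psi : set T -> set (set T)) :
  is_gts X OpX CovX ->
  weakly_normal X OpX ->
  locally_compact_in X (gen_top X OpX) ->
  ~ top_compact X OpX ->
  is_gts K OpK CovK ->
  weakly_hausdorff K OpK ->
  top_compact K OpK ->
  X `&` K = set0 ->
  lattice_iso X OpX K OpK psi ->
  (psi_correlated X OpX CovX K OpK CovK psi \/ (small OpX CovX /\ small OpK CovK)) ->
  strict_compactification X OpX CovX
      (Z X K) (Ops X OpX K OpK psi) (Covs X OpX CovX K OpK CovK psi) id
  /\ weakly_hausdorff (Z X K) (Ops X OpX K OpK psi)
  /\ strict_subspace (Covs X OpX CovX K OpK CovK psi) K OpK CovK.
Proof.
move=> gX wnX lcX _ gK hK cK disjXK iso hcov.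
split; [split|split].
- exact: (gts_Z psi gX gK).
- exact: (compact_Z gX wnX lcX gK cK disjXK iso).
- exact: (strict_embedding_Z gX gK disjXK iso hcov).
- by move=> V tV ne; apply: (X_dense gX gK disjXK iso tV ne).
- exact: (weakly_hausdorff_Z gX wnX lcX gK hK cK disjXK iso).
- apply: (strict_subspace_trace gK).
  exact: (trace_Z_K gX gK disjXK iso hcov).
Qed.
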